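(* Let $A$ be a VPA. The functions $t_f:\mathrm{AllFlat}\to\mathrm{rConf}$ and $\nu_f=\mathsf{rep}\circ t_f:\mathrm{AllFlat}\to\mathrm{Rep}$ are rational.
   Context: VPA $A=(Q,\Sigma,\Gamma,\bot,q_0,\delta,F)$ over a pushdown alphabet $\Sigma=\Sigma_c\cup\Sigma_r\cup\Sigma_{\mathit{int}}$ with $\delta_c:Q\times\Sigma_c\to(\Gamma\setminus\{\bot\})\times Q$, $\delta_r:Q\times\Sigma_r\times\Gamma\to Q$, $\delta_{\mathit{int}}:Q\times\Sigma_{\mathit{int}}\to Q$; configurations $\alpha q$ with $\alpha\in\bot(\Gamma\setminus\{\bot\})^*$; a call letter $a$ with $\delta(p,a)=(\gamma,q)$ maps $\alpha p$ to $\alpha\gamma q$; internal letters change only the state; return letters pop the top $\gamma\ne\bot$ (new state $\delta(p,a,\gamma)$) or read $\bot$ without popping. $\delta(c,w)$: configuration reached from $c$ on $w$; $\mathcal L(c)$: words leading to a state in $F$. $\mathrm{rConf}$: configurations reachable from $\bot q_0$. $\mathsf{rep}(c)$: length-lexicographically least (for fixed linear orders on $\Gamma$ and $Q$) $c'\in\mathrm{rConf}$ with $\mathcal L(c')=\mathcal L(c)$; $\mathrm{Rep}=\mathsf{rep}(\mathrm{rConf})$. $\Sigma_f=\Sigma_c\cup Q\cup Q^Q$ (disjoint union); $\mathrm{AllFlat}=Q^*(\Sigma_c\cup Q^QQ^* )^*$, each element factors uniquely as $s_0s_1\cdots s_m$ with $s_0\in Q^*$, $s_i\in\Sigma_c\cup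 Q^QQ^*$. $t_f(\varepsilon)=\bot q_0$; $t_f(q_1\cdots q_n)=\bot q_1$ for $n\ge1$; if $s_m\in\Sigma_c$ then $t_f(s_0\cdots s_m)=\delta(t_f(s_0\cdots s_{m-1}),s_m)$; if $s_m=\tau q_2\cdots q_k\in Q^QQ^*$ and $t_f(s_0\cdots s_{m-1})=\alpha q$ then $t_f(s_0\cdots s_m)=\alpha\tau(q)$. A partial function between free monoids is rational if its graph is a rational subset of the product monoid (recognized by a finite transducer). *)

From mathcomp Require Import all_boot.
Set Implicit Arguments. Unset Strict Implicit. Unset Printing Implicit Defensive.

Section Rational.
Variables A B : Type.
Definition mpair := (seq A * seq B)%type.

Definition rcat (p q : mpair) : mpair := (p.1 ++ q.1, p.2 ++ q.2).

Inductive rstar (S : mpair -> Prop) : mpair -> Prop :=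
| rstar_nil : rstar S ([::], [::])
| rstar_cons p q : S p -> rstar S q -> rstar S (rcat p q).

Inductive rational : (mpair -> Prop) -> Prop :=
| rat_empty : rational (fun _ => False)
| rat_single (u : seq A) (v : seq B) : rational (fun p => p = (u, v))
| rat_union S T : rational S -> rational T -> rational (fun p => S p \/ T p)
| rat_prod S T : rational S -> rational T ->
    rational (fun p => exists p1 p2, [/\ S p1, T p2 & p = rcat p1 p2])
| rat_star S : rational S -> rational (rstar S)
| rat_ext S T : (forall p, S p <-> T p) -> rational S -> rational T.

Definition rational_fun (graph : seq A -> seq B -> Prop) :=
  rational (fun p => graph p.1 p.2).
End Rational.

Record VPA := {
  Sc : finType;
  Sr : finType;
  Si : finType;
  Qs : finType;
  Gm : finType;
  bot : Gm;
  q0 : Qs;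
  dc : Qs -> Sc -> Gm * Qs;
  dr : Qs -> Sr -> Gm -> Qs;
  di : Qs -> Si -> Qs;
  Fin : {set Qs};
  dc_nbot : forall p a, (dc p a).1 != bot
}.

Section VPADefs.
Variable A : VPA.

Definition Sigma := ((Sc A + Sr A) + Si A)%type.

(* A configuration  bot g_1 ... g_k q  is represented as ([:: g_k; ...; g_1], q):
   the stack content above bot, top first, and the state. *)
Definition conf := (seq (Gm A) * Qs A)%type.

Definition enc (c : conf) : seq (Gm A + Qs A) :=
  inl (bot A) :: map inl (rev c.1) ++ [:: inr c.2].

Definition step (c : conf) (x : Sigma) : conf :=
  match x with
  | inl (inl a) => let gq := dc c.2 a in (gq.1 :: c.1, gq.2)
  | inl (inr a) =>
      match c.1 with
      | g :: s => (s, dr c.2 a g)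
      | [::] => ([::], dr c.2 a (bot A))
      end
  | inr a => (c.1, di c.2 a)
  end.

Definition delta (c : conf) (w : seq Sigma) : conf := foldl step c w.

Definition lang (c : conf) (w : seq Sigma) : bool := (delta c w).2 \in Fin A.

Definition init_conf : conf := ([::], q0 A).

Definition rConf (c : conf) : Prop := exists w, delta init_conf w = c.

(* length-lexicographic order on words over Gamma u Q, induced by
   linear orders on Gamma and Q given by injective ranks rkG, rkQ *)
Variables (rkG : Gm A -> nat) (rkQ : Qs A -> nat).

Definition rk (x : Gm A + Qs A) : nat :=
  match x with inl g => (rkG g).*2 | inr q => (rkQ q).*2.+1 end.

Fixpoint lex_le (u v : seq nat) : bool :=
  match u, v with
  | [::], _ => true
  | _ :: _, [::] => false
  | x :: u', y :: v' => (x < y) || ((x == y) && lex_le u' v')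
  end.

Definition llex_le (u v : seq (Gm A + Qs A)) : bool :=
  (size u < size v) ||
  ((size u == size v) && lex_le (map rk u) (map rk v)).

Definition is_rep (c c' : conf) : Prop :=
  [/\ rConf c',
      (forall w, lang c' w = lang c w) &
      (forall c'', rConf c'' -> (forall w, lang c'' w = lang c w) ->
                   llex_le (enc c') (enc c''))].

Definition Sigmaf := ((Sc A + Qs A) + {ffun Qs A -> Qs A})%type.

Inductive block :=
| BCall of Sc A
| BTau of {ffun Qs A -> Qs A} & seq (Qs A).

Definition block_word (b : block) : seq Sigmaf :=
  match b with
  | BCall a => [:: inl (inl a)]
  | BTau tau qs => inr tau :: map (fun q => inl (inr q)) qs
  end.

Definition flat_word (s0 : seq (Qs A)) (bs : seq block) : seq Sigmaf :=
  map (fun q => inl (inr q)) s0 ++ flatten (map block_word bs).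

Definition AllFlat (w : seq Sigmaf) : Prop :=
  exists s0 bs, w = flat_word s0 bs.

Definition tf_block (c : conf) (b : block) : conf :=
  match b with
  | BCall a => step c (inl (inl a))
  | BTau tau _ => (c.1, tau c.2)
  end.

Definition tf_fact (s0 : seq (Qs A)) (bs : seq block) : conf :=
  foldl tf_block (match s0 with [::] => init_conf | q1 :: _ => ([::], q1) end) bs.

(* graph of t_f on AllFlat (the factorization being unique) *)
Definition tf_rel (w : seq Sigmaf) (c : conf) : Prop :=
  exists s0 bs, w = flat_word s0 bs /\ c = tf_fact s0 bs.

Definition nuf_rel (w : seq Sigmaf) (c' : conf) : Prop :=
  exists c, tf_rel w c /\ is_rep c c'.

End VPADefs.

From mathcomp Require Import all_boot boolp zify.
Set Implicit Arguments. Unset Strict Implicit. Unset Printing Implicit Defensive.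

(* A flat word writes the stack of its configuration bottom-up, one cell per call
   letter, and determines the state of [A] as it goes; so a one-way transducer can
   output [enc (t_f w)].  For [nu_f] it suffices that the relation [c' = rep c] is
   recognised by a finite automaton reading the two stacks in lockstep from the
   top: language equivalence is decided by the sets of state pairs reached at the
   first pop below the current cell, reachability by chains of push summaries, and
   minimality by a subset construction over guessed smaller equivalent reachable
   configurations.  The transducer then guesses the output stack bottom-up and runs
   that automaton backwards. *)

Section RationalClosure.
Variables X Y : Type.
Implicit Types (p q r : mpair X Y) (S T : mpair X Y -> Prop).

Lemma rcat0s p : rcat ([::], [::]) p = p.
Proof. by case: p. Qed.

Lemma rcats0 p : rcat p ([::], [::]) = p.
Proof. by case: p => u v; rewrite /rcat /= !cats0. Qed.

Lemma rcatA p q r : rcat p (rcat q r) = rcat (rcat p q) r.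
Proof. by rewrite /rcat /= !catA. Qed.

Definition rprod S T p := exists p1 p2, [/\ S p1, T p2 & p = rcat p1 p2].

Lemma rprod_rcat S T p1 p2 : S p1 -> T p2 -> rprod S T (rcat p1 p2).
Proof. by move=> h1 h2; exists p1, p2. Qed.

Lemma rational_rprod S T : rational S -> rational T -> rational (rprod S T).
Proof. exact: rat_prod. Qed.

Lemma rational_and (P : Prop) S : rational S -> rational (fun p => P /\ S p).
Proof.
move=> ratS; case: (pselect P) => [HP|nP].
  by apply: rat_ext ratS => p; split=> [|[]].
by apply: rat_ext (@rat_empty X Y) => p; split=> [|[]].
Qed.

Lemma rational_exists_mem (I : eqType) (s : seq I) (F : I -> mpair X Y -> Prop) :
  (forall i, rational (F i)) -> rational (fun p => exists2 i, i \in s & F i p).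
Proof.
move=> ratF; elim: s => [|i s IHs].
  by apply: rat_ext (@rat_empty X Y) => p; split=> [|[]].
apply: rat_ext (rat_union (ratF i) IHs) => p; split.
  by case=> [Fp|[j js Fp]]; [exists i|exists j]; rewrite ?inE ?eqxx ?js ?orbT.
by case=> j; rewrite inE => /predU1P[->|js] Fp; [left|right; exists j].
Qed.

Lemma rational_exists (I : finType) (F : I -> mpair X Y -> Prop) :
  (forall i, rational (F i)) -> rational (fun p => exists i, F i p).
Proof.
move=> /(rational_exists_mem (enum I)); apply: rat_ext => p.
by split=> [[i _ Fp]|[i Fp]]; exists i; rewrite ?mem_enum.
Qed.

End RationalClosure.

Section LabelledPaths.
Variables (X Y : Type) (V : finType) (E : V -> mpair X Y -> V -> Prop).
Hypothesis rational_E : forall s t, rational (fun x => E s x t).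

Inductive lpath : V -> mpair X Y -> V -> Prop :=
| lpath_nil s : lpath s ([::], [::]) s
| lpath_cons s x r y t : E s x r -> lpath r y t -> lpath s (rcat x y) t.

Inductive lpath_via (P : {set V}) : V -> mpair X Y -> V -> Prop :=
| lpath_via1 s x t : E s x t -> lpath_via P s x t
| lpath_via_cons s x r y t :
    E s x r -> r \in P -> lpath_via P r y t -> lpath_via P s (rcat x y) t.

Lemma lpath_via_subset (P P' : {set V}) s x t :
  P \subset P' -> lpath_via P s x t -> lpath_via P' s x t.
Proof.
move=> sPP'; elim=> {s x t} [s x t e|s x r y t e rP _ IH]; first exact: lpath_via1.
exact: lpath_via_cons e (subsetP sPP' r rP) IH.
Qed.

Lemma lpath_via_cat (P : {set V}) s x r y t :
  lpath_via P s x r -> r \in P -> lpath_via P r y t -> lpath_via P s (rcat x y) t.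
Proof.
elim=> {s x r} [s x r e|s x r1 y1 r e r1P _ IH] rP ry.
  exact: lpath_via_cons e rP ry.
by rewrite -rcatA; apply: lpath_via_cons e r1P (IH rP ry).
Qed.

Lemma lpath_via_star (P : {set V}) r x y t : r \in P ->
  rstar (fun x => lpath_via P r x r) x -> lpath_via P r y t ->
  lpath_via P r (rcat x y) t.
Proof.
move=> rP; elim=> {x} [|x1 x2 loop _ IH] ry; first by rewrite rcat0s.
by rewrite -rcatA; apply: lpath_via_cat loop rP (IH ry).
Qed.

Lemma lpath_via_setU1 (P : {set V}) r s x t : r \notin P ->
  lpath_via (r |: P) s x t <->
  lpath_via P s x t \/
  exists x1 x2 x3, [/\ lpath_via P s x1 r, rstar (fun x => lpath_via P r x r) x2,
                       lpath_via P r x3 t & x = rcat x1 (rcat x2 x3)].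
Proof.
move=> rNP; split.
  elim=> {s x t} [s x t e|s x r0 y t e]; first by left; apply: lpath_via1.
  rewrite in_setU1 => /predU1P[er0|r0P] _.
    subst r0; case=> [ry|[x1 [x2 [x3 [p1 p2 p3 ->]]]]]; right.
      exists x, ([::], [::]), y.
      by split; [exact: lpath_via1|exact: rstar_nil|exact: ry|rewrite rcat0s].
    exists x, (rcat x1 x2), x3.
    by split=> //; [exact: lpath_via1|exact: rstar_cons|rewrite !rcatA].
  case=> [ry|[x1 [x2 [x3 [p1 p2 p3 ->]]]]]; first by left; apply: lpath_via_cons e r0P ry.
  right; exists (rcat x x1), x2, x3; split=> //; first exact: lpath_via_cons e r0P p1.
  by rewrite !rcatA.
have sub : P \subset r |: P by apply/subsetP => z zP; rewrite in_setU1 zP orbT.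
have rP : r \in r |: P by rewrite in_setU1 eqxx.
case=> [p|[x1 [x2 [x3 [p1 p2 p3 ->]]]]]; first exact: lpath_via_subset p.
apply: (lpath_via_cat (lpath_via_subset sub p1) rP).
apply: (lpath_via_star rP _ (lpath_via_subset sub p3)).
elim: p2 => [|y1 y2 loop _ IH]; first exact: rstar_nil.
exact: rstar_cons (lpath_via_subset sub loop) IH.
Qed.

(* Kleene's construction, by induction on the set of allowed inner vertices. *)
Lemma rational_lpath_via (P : {set V}) s t : rational (fun x => lpath_via P s x t).
Proof.
move: {2}#|P| (erefl #|P|) => n; elim: n P s t => [|n IH] P s t cardP.
  move/eqP: cardP; rewrite cards_eq0 => /eqP ->.
  apply: rat_ext (rational_E s t) => x; split; first exact: lpath_via1.
  by case=> // s0 x0 r y t0 _; rewrite inE.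
have [r rP] : exists r, r \in P by apply/set0Pn; rewrite -card_gt0 cardP.
have rNP : r \notin P :\ r by rewrite !inE eqxx.
have /IH IHr : #|P :\ r| = n by move: cardP; rewrite (cardsD1 r P) rP add1n => -[].
rewrite -(setD1K rP).
apply: rat_ext (rat_union (IHr s t) (rational_rprod (IHr s r)
                 (rational_rprod (rat_star (IHr r r)) (IHr r t)))).
move=> x; rewrite lpath_via_setU1 //; split.
  case=> [p|[x1 [_ [p1 [x2 [x3 [p2 p3 ->]]] ->]]]]; [by left|right].
  by exists x1, x2, x3.
case=> [p|[x1 [x2 [x3 [p1 p2 p3 ->]]]]]; [by left|right].
by apply: rprod_rcat p1 (rprod_rcat _ _).
Qed.

Lemma rational_lpath s t : rational (fun x => lpath s x t).
Proof.
apply: rat_ext (rat_union (rational_and (s = t) (rat_single [::] [::]))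
                          (rational_lpath_via [set: V] s t)) => x; split.
  case=> [[-> ->]|]; first exact: lpath_nil.
  elim=> {s x t} [s x t e|s x r y t e _ _ IH]; last exact: lpath_cons e IH.
  by rewrite -[x]rcats0; apply: lpath_cons e (lpath_nil _).
elim=> {s x t} [s|s x r y t e _ IH]; first by left.
right; case: IH => [[<- ->]|p]; first by rewrite rcats0; apply: lpath_via1.
by apply: lpath_via_cons e _ p; rewrite inE.
Qed.

End LabelledPaths.

Section ZipPad.
Variable T : Type.

Fixpoint zip_pad (s t : seq T) : seq (option T * option T) :=
  match s, t with
  | [::], _ => map (fun y => (None, Some y)) t
  | _, [::] => map (fun x => (Some x, None)) s
  | x :: s', y :: t' => (Some x, Some y) :: zip_pad s' t'
  end.

Lemma zip_pad_behead s t : 0 < size s + size t ->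
  zip_pad s t = (ohead s, ohead t) :: zip_pad (behead s) (behead t).
Proof. by case: s => [|x [|? ?]]; case: t. Qed.

Lemma zip_pad_rcons_l s t x : size t <= size s ->
  zip_pad (rcons s x) t = rcons (zip_pad s t) (Some x, None).
Proof. by elim: s t => [|y s IH] [|z t] //= le_ts; rewrite ?map_rcons ?IH. Qed.

Lemma zip_pad_rcons_r s t y : size s <= size t ->
  zip_pad s (rcons t y) = rcons (zip_pad s t) (None, Some y).
Proof. by elim: s t => [|x s IH] [|z t] //= le_st; rewrite ?map_rcons ?IH. Qed.

Lemma zip_pad_rcons s t x y : size s = size t ->
  zip_pad (rcons s x) (rcons t y) = rcons (zip_pad s t) (Some x, Some y).
Proof. by elim: s t => [|z s IH] [|w t] //= [eq_st]; rewrite IH. Qed.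

End ZipPad.

Section FlatTransducer.
Variable A : VPA.
Notation Q := (Qs A).
Notation G := (Gm A).
Notation MP := (mpair (Sigmaf A) (Gm A + Qs A)).

Definition flat_state (q : Q) : Sigmaf A := inl (inr q).

Definition run_blocks (q : Q) (bs : seq (block A)) : conf A :=
  foldl (@tf_block A) ([::], q) bs.

Lemma foldl_tf_block bs s q :
  foldl (@tf_block A) (s, q) bs = ((run_blocks q bs).1 ++ s, (run_blocks q bs).2).
Proof.
rewrite /run_blocks; elim: bs s q => [|[a|tau qs] bs IH] s q //=.
by rewrite IH [in RHS]IH -catA.
Qed.

Lemma run_blocks_call q a bs : run_blocks q (BCall a :: bs) =
  (rcons (run_blocks (dc q a).2 bs).1 (dc q a).1, (run_blocks (dc q a).2 bs).2).
Proof. by rewrite {1}/run_blocks /= foldl_tf_block cats1. Qed.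

Lemma tf_fact_run_blocks s0 bs : tf_fact s0 bs = run_blocks (head (q0 A) s0) bs.
Proof. by case: s0. Qed.

Lemma rational_flat_states :
  rational (fun x : MP => exists qs, x = (map flat_state qs, [::])).
Proof.
have rat_letter : rational (fun x : MP => exists q, x = ([:: flat_state q], [::])).
  by apply: rational_exists => q; apply: rat_single.
apply: rat_ext (rat_star rat_letter) => x; split.
  by elim=> [|_ _ [q ->] _ [qs ->]]; [exists [::]|exists (q :: qs)].
case=> qs ->; elim: qs => [|q qs IH]; first exact: rstar_nil.
by apply: (rstar_cons (p := ([:: flat_state q], [::]))) IH; exists q.
Qed.

Definition trace (bs : seq (block A)) (al : seq G) : MP :=
  (flatten (map (@block_word A) bs), map inl (rev al)).

Lemma trace_tau tau qs bs al :
  trace (BTau tau qs :: bs) al = rcat (inr tau :: map flat_state qs, [::]) (trace bs al).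
Proof. by []. Qed.

Lemma trace_call a bs al :
  trace (BCall a :: bs) al = rcat ([:: inl (inl a)], [::]) (trace bs al).
Proof. by []. Qed.

Lemma trace_rcons bs al g : trace bs (rcons al g) = rcat ([::], [:: inl g]) (trace bs al).
Proof. by rewrite /trace rev_rcons. Qed.

Variables (S : finType) (init : Q -> Q -> S)
  (st : S -> option G * option G -> S) (acc : S -> bool).

Definition accepts_pair (c c' : conf A) : bool :=
  acc (foldl st (init c.2 c'.2) (zip_pad c.1 c'.1)).

Definition run_pair (d : S) (s t : seq G) : S := foldl st d (zip_pad s t).

(* The transducer writes both stacks bottom-up, so it runs the
   automaton backwards, guessing at each step the state it had before reading the
   cells written so far.  The extra cells of the longer stack lie at the bottom and
   are written first: phase [Some true] (resp. [Some false]) extends only the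
   input (resp. output) stack, phase [None] extends both. *)
Definition tstate := ((option bool * Q) * S)%type.

Definition tstep (s : tstate) (x : MP) (t : tstate) : Prop :=
  let: (ph, q, d) := s in let: (ph', q', d') := t in
  (exists tau : {ffun Q -> Q}, [/\ ph' = ph, q' = tau q & d' = d] /\
               exists qs, x = (inr tau :: map flat_state qs, [::]))
  \/ (exists a, [/\ ph = Some true, ph' = ph, q' = (dc q a).2
                  & d = st d' (Some (dc q a).1, None)] /\ x = ([:: inl (inl a)], [::]))
  \/ (exists g, [/\ ph = Some false, ph' = ph, q' = q
                  & d = st d' (None, Some g)] /\ x = ([::], [:: inl g]))
  \/ (exists ag : Sc A * G, [/\ ph = None, ph' = None, q' = (dc q ag.1).2
                  & d = st d' (Some (dc q ag.1).1, Some ag.2)] /\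
                  x = ([:: inl (inl ag.1)], [:: inl ag.2]))
  \/ ([/\ ph != None, ph' = None, q' = q & d' = d] /\ x = ([::], [::])).

Lemma rational_tstep s t : rational (fun x => tstep s x t).
Proof.
case: s t => [[ph q] d] [[ph' q'] d'] /=.
have rat_tau (tau : {ffun Q -> Q}) :
    rational (fun x : MP => exists qs, x = (inr tau :: map flat_state qs, [::])).
  apply: rat_ext (rational_rprod (rat_single [:: inr tau] [::]) rational_flat_states).
  move=> x; split; first by case=> _ [_ [-> [qs ->] ->]]; exists qs.
  case=> qs ->; exists ([:: inr tau], [::]), (map flat_state qs, [::]).
  by split=> //; exists qs.
by repeat apply: rat_union;
  try (apply: rational_exists => ?); apply: rational_and => //; apply: rat_single.
Qed.

Definition phase_sizes (ph : option bool) (m n : nat) : bool :=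
  match ph with None => m == n | Some true => n <= m | Some false => m <= n end.

Lemma tpath_sound s x t : lpath tstep s x t -> forall qf dT, t = (None, qf, dT) ->
  exists bs al, [/\ x = trace bs al, (run_blocks s.1.2 bs).2 = qf,
     phase_sizes s.1.1 (size (run_blocks s.1.2 bs).1) (size al)
   & run_pair dT (run_blocks s.1.2 bs).1 al = s.2].
Proof.
elim=> {s x t} [s|[[ph q] d] x [[ph' q'] d'] y t e _ IH] qf dT et.
  by exists [::], [::]; rewrite et.
move: {IH et}(IH qf dT et) => /=.
case: e => [[tau [[-> -> ->] [qs ->]]]|[[a [[-> -> -> ->] ->]]|[[g [[-> -> -> ->] ->]]|
           [[[a g] [[-> -> -> ->] ->]]|[[ph_ok -> -> ->] ->]]]]]
           [bs [al [-> <- sizes <-]]].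
- by exists (BTau tau qs :: bs), al.
- exists (BCall a :: bs), al; rewrite run_blocks_call size_rcons /=.
  by rewrite /run_pair zip_pad_rcons_l // -cats1 foldl_cat ltnW.
- exists bs, (rcons al g); rewrite trace_rcons size_rcons /=.
  by rewrite /run_pair zip_pad_rcons_r // -cats1 foldl_cat ltnW.
- exists (BCall a :: bs), (rcons al g).
  rewrite run_blocks_call trace_rcons trace_call rcatA !size_rcons /=.
  by rewrite /run_pair zip_pad_rcons ?(eqP sizes) // -cats1 foldl_cat.
- exists bs, al; split=> //.
  by case: ph ph_ok => [[]|] //= _; rewrite (eqP sizes) leqnn.
Qed.

Lemma tpath_sync q bs al dT : size (run_blocks q bs).1 = size al ->
  lpath tstep (None, q, run_pair dT (run_blocks q bs).1 al)
    (trace bs al) (None, (run_blocks q bs).2, dT).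
Proof.
elim: bs q al => [|[a|tau qs] bs IH] q al.
- by move/esym/size0nil->; apply: lpath_nil.
- case/lastP: al => [|al g]; rewrite run_blocks_call !size_rcons // => -[eq_sizes].
  rewrite trace_rcons trace_call rcatA /run_pair zip_pad_rcons // -cats1 foldl_cat.
  by apply: (lpath_cons _ (IH _ _ eq_sizes)); right; right; right; left; exists (a, g).
- move=> eq_sizes; rewrite trace_tau; apply: (lpath_cons _ (IH _ _ eq_sizes)).
  by left; exists tau; split=> //; exists qs.
Qed.

Lemma tpath_switch b q bs al dT : size (run_blocks q bs).1 = size al ->
  lpath tstep (Some b, q, run_pair dT (run_blocks q bs).1 al)
    (trace bs al) (None, (run_blocks q bs).2, dT).
Proof.
move=> eq_sizes; rewrite -[trace _ _]rcat0s.
by apply: (lpath_cons _ (tpath_sync dT eq_sizes)); do 4 right.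
Qed.

Lemma tpath_in q bs al dT : size al <= size (run_blocks q bs).1 ->
  lpath tstep (Some true, q, run_pair dT (run_blocks q bs).1 al)
    (trace bs al) (None, (run_blocks q bs).2, dT).
Proof.
elim: bs q => [|[a|tau qs] bs IH] q le_sizes.
- by apply: tpath_switch; apply/eqP; rewrite eqn_leq le_sizes.
- have [eq_sizes|ne_sizes] := eqVneq (size (run_blocks q (BCall a :: bs)).1) (size al).
    exact: tpath_switch.
  have {ne_sizes}le_sizes : size al <= size (run_blocks (dc q a).2 bs).1.
    by move: le_sizes ne_sizes; rewrite run_blocks_call size_rcons; lia.
  rewrite trace_call run_blocks_call /run_pair zip_pad_rcons_l // -cats1 foldl_cat.
  by apply: (lpath_cons _ (IH _ le_sizes)); right; left; exists a.
- rewrite trace_tau; apply: (lpath_cons _ (IH _ le_sizes)).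
  by left; exists tau; split=> //; exists qs.
Qed.

Lemma tpath_out q bs al dT : size (run_blocks q bs).1 <= size al ->
  lpath tstep (Some false, q, run_pair dT (run_blocks q bs).1 al)
    (trace bs al) (None, (run_blocks q bs).2, dT).
Proof.
elim/last_ind: al => [|al g IH] le_sizes.
  by apply: tpath_switch; apply/eqP; rewrite eqn_leq le_sizes.
have [eq_sizes|ne_sizes] := eqVneq (size (run_blocks q bs).1) (size (rcons al g)).
  exact: tpath_switch.
have {ne_sizes}le_sizes : size (run_blocks q bs).1 <= size al.
  by move: le_sizes ne_sizes; rewrite size_rcons; lia.
rewrite trace_rcons /run_pair zip_pad_rcons_r // -cats1 foldl_cat.
by apply: (lpath_cons _ (IH le_sizes)); right; right; left; exists g.
Qed.

Definition init_prefix (qi : Q) (x : MP) : Prop :=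
  exists s0, head (q0 A) s0 = qi /\ x = (map flat_state s0, [::]).

Lemma rational_init_prefix qi : rational (init_prefix qi).
Proof.
apply: rat_ext (rat_union (rational_and (qi = q0 A) (rat_single [::] [::]))
  (rational_rprod (rat_single [:: flat_state qi] [::]) rational_flat_states)).
move=> x; split.
  by case=> [[-> ->]|[_ [_ [-> [qs ->] ->]]]]; [exists [::]|exists (qi :: qs)].
case=> [[|q s0]] /= [<- ->]; [by left|right].
by exists ([:: flat_state q], [::]), (map flat_state s0, [::]); split=> //; exists s0.
Qed.

(* The guessed initial state of [A], initial phase and automaton state, final
   state of [A] and output state. *)
Definition tguess := (Q * option bool * S * Q * Q)%type.

Definition taccept (i : tguess) (x : MP) : Prop :=
  let: (qi, ph, d, qf, q') := i in
  acc d /\ exists s0 y, [/\ head (q0 A) s0 = qi,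
    lpath tstep (ph, qi, d) y (None, qf, init qf q')
  & x = rcat (map flat_state s0, [::])
          (rcat ([::], [:: inl (bot A)]) (rcat y ([::], [:: inr q'])))].

Lemma rational_taccept i : rational (taccept i).
Proof.
case: i => [[[[qi ph] d] qf] q'].
apply: rat_ext (rational_and (acc d) (rational_rprod (rational_init_prefix qi)
  (rational_rprod (rat_single [::] [:: inl (bot A)])
    (rational_rprod (rational_lpath rational_tstep (ph, qi, d) (None, qf, init qf q'))
                    (rat_single [::] [:: inr q']))))) => x.
split=> [[acc_d [_ [_ [[s0 [s0_qi ->]] [_ [_ [-> [y [_ [p -> ->]]] ->]]] ->]]]]|].
  by split=> //; exists s0, y.
case=> acc_d [s0 [y [s0_qi p ->]]]; split=> //.
apply: rprod_rcat; first by exists s0.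
exact: rprod_rcat (erefl _) (rprod_rcat p (erefl _)).
Qed.

Lemma flat_word_enc s0 bs al q' :
  (flat_word s0 bs, enc (al, q')) = rcat (map flat_state s0, [::])
    (rcat ([::], [:: inl (bot A)]) (rcat (trace bs al) ([::], [:: inr q']))).
Proof. by rewrite /rcat /= cats0. Qed.

Lemma taccept_sound i w u : taccept i (w, u) ->
  exists c c', [/\ tf_rel w c, accepts_pair c c' & u = enc c'].
Proof.
case: i => [[[[qi ph] d] qf] q'] [acc_d [s0 [y [s0_qi p ew]]]].
have [bs [al [ey /= qf_eq _ d_eq]]] := tpath_sound p (erefl _).
move: ew; rewrite ey -flat_word_enc => -[-> ->].
exists (run_blocks qi bs), (al, q'); split=> //.
- by exists s0, bs; rewrite tf_fact_run_blocks s0_qi.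
- by move: acc_d; rewrite -d_eq -qf_eq.
Qed.

Lemma taccept_complete w c c' : tf_rel w c -> accepts_pair c c' ->
  exists i, taccept i (w, enc c').
Proof.
case=> s0 [bs [-> ->]]; case: c' => al q'; rewrite tf_fact_run_blocks.
set qi := head (q0 A) s0; set t := run_blocks qi bs => acc_t.
exists (qi, Some (size al <= size t.1), run_pair (init t.2 q') t.1 al, t.2, q').
split=> //; exists s0, (trace bs al); rewrite flat_word_enc; split=> //.
case: leqP => [le_sizes|/ltnW le_sizes]; [exact: tpath_in|exact: tpath_out].
Qed.

Theorem rational_tf_accepts_pair : rational_fun (fun w u =>
  exists c c', [/\ tf_rel w c, accepts_pair c c' & u = enc c']).
Proof.
apply: rat_ext (rational_exists rational_taccept) => -[w u] /=; split.
  by case=> i /taccept_sound.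
by case=> c [c' [tf_wc acc_cc' ->]]; apply: taccept_complete acc_cc'.
Qed.

End FlatTransducer.

Lemma foldl_and_eq_zip_pad (T : eqType) (s t : seq T) b :
  foldl (fun b (l : option T * option T) => b && (l.1 == l.2)) b (zip_pad s t)
  = b && (s == t).
Proof.
have foldl_false L :
    foldl (fun b (l : option T * option T) => b && (l.1 == l.2)) false L = false.
  by elim: L.
elim: s t b => [|x s IH] [|y t] b /=; rewrite ?andbT ?andbF ?foldl_false //.
by rewrite IH eqseq_cons andbA.
Qed.

Theorem rational_tf (A : VPA) :
  rational_fun (fun w u => exists c : conf A, tf_rel w c /\ u = enc c).
Proof.
have := rational_tf_accepts_pair (fun q q' : Qs A => q == q')
          (fun b l => b && (l.1 == l.2)) id.
apply: rat_ext => -[w u] /=.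
have accepts_eq c c' :
    accepts_pair (fun q q' => q == q') (fun b l => b && (l.1 == l.2)) id c c' = (c == c').
  case: c c' => s q [s' q'].
  by rewrite /accepts_pair foldl_and_eq_zip_pad xpair_eqE andbC.
split; first by case=> c [c' [tf_wc]]; rewrite accepts_eq => /eqP <- ->; exists c.
by case=> c [tf_wc ->]; exists c, c; rewrite accepts_eq eqxx.
Qed.

Section LanguageEquivalence.
Variable A : VPA.
Notation Q := (Qs A).
Notation G := (Gm A).
Implicit Types (u w : seq (Sigma A)) (b : seq G) (p q : Q).

(* The height of the stack above its initial content after reading [u], or [None]
   once [u] has tried to pop that initial content. *)
Definition depth_step (o : option nat) (x : Sigma A) : option nat :=
  if o is Some d then
    match x with
    | inl (inl _) => Some d.+1
    | inl (inr _) => if d is d'.+1 then Some d' else None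
    | inr _ => Some d
    end
  else None.

Definition depth u := foldl depth_step (Some 0) u.

Lemma depth_rcons u x : depth (rcons u x) = depth_step (depth u) x.
Proof. by rewrite /depth foldl_rcons. Qed.

Lemma delta_rcons (c : conf A) u x : delta c (rcons u x) = step (delta c u) x.
Proof. by rewrite /delta foldl_rcons. Qed.

Lemma delta_cat (c : conf A) u w : delta c (u ++ w) = delta (delta c u) w.
Proof. by rewrite /delta foldl_cat. Qed.

Lemma delta_depth u d : depth u = Some d -> forall b p,
  delta (b, p) u = ((delta ([::], p) u).1 ++ b, (delta ([::], p) u).2) /\
  size (delta ([::], p) u).1 = d.
Proof.
elim/last_ind: u d => [|u x IH] d; first by case=> <-.
rewrite depth_rcons; case Du: (depth u) => [d0|] // + b p.
rewrite !delta_rcons; have [-> size_d0] := IH d0 Du b p.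
case: (delta ([::], p) u) size_d0 => s q /= <-.
by case: x => [[a|r]|i] /=; [case=> <-|case: s => [|g s] //= [<-]|case=> <-].
Qed.

Lemma depth_exit w : depth w != None \/
  exists u r w', w = u ++ inl (inr r) :: w' /\ depth u = Some 0.
Proof.
elim/last_ind: w => [|w x IH]; first by left.
case Dwx: (depth (rcons w x)) => [d|]; [by left|right].
move: Dwx; rewrite depth_rcons; case Dw: (depth w) => [d0|] /=.
  by case: x => [[a|r]|i] //; case: d0 Dw => // Dw _; exists w, r, [::]; rewrite cats1.
case: IH => [|[u [r [w' [-> Du]]]]]; first by rewrite Dw.
by exists u, r, (rcons w' x); rewrite rcons_cat.
Qed.

Definition stack_top b := head (bot A) b.

Lemma delta_exit b p u r w' : depth u = Some 0 ->
  delta (b, p) (u ++ inl (inr r) :: w') =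
  delta (behead b, dr (delta ([::], p) u).2 r (stack_top b)) w'.
Proof.
move=> Du; have [eq_delta] := delta_depth Du b p.
rewrite delta_cat eq_delta -cat1s delta_cat.
by case: (delta ([::], p) u) => s q /= /size0nil ->; case: b {eq_delta}.
Qed.

Lemma lang_depth b p w : depth w != None ->
  lang (b, p) w = ((delta ([::], p) w).2 \in Fin A).
Proof. by case Dw: (depth w) => [d|] // _; rewrite /lang (delta_depth Dw b p).1. Qed.

Definition equiv_on (Z : {set Q * Q}) b1 b2 : Prop :=
  forall z, z \in Z -> forall w, lang (b1, z.1) w = lang (b2, z.2) w.

Definition agree_above (Z : {set Q * Q}) : Prop :=
  forall z, z \in Z -> forall w, depth w != None ->
    ((delta ([::], z.1) w).2 \in Fin A) = ((delta ([::], z.2) w).2 \in Fin A).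

Definition exit_pairs (Z : {set Q * Q}) (g1 g2 : G) : {set Q * Q} :=
  [set z | `[< exists2 y, y \in Z & exists u r, depth u = Some 0 /\
     z = (dr (delta ([::], y.1) u).2 r g1, dr (delta ([::], y.2) u).2 r g2)>]].

(* A word either never reads below the top symbol, or pops it at a first exit. *)
Lemma equiv_onE Z b1 b2 : equiv_on Z b1 b2 <->
  agree_above Z /\
  equiv_on (exit_pairs Z (stack_top b1) (stack_top b2)) (behead b1) (behead b2).
Proof.
split=> [eqZ|[agreeZ eq_exit] z zZ w].
  split=> [z zZ w Dw|z].
    by rewrite -(lang_depth b1) // -(lang_depth b2) //; apply: eqZ.
  rewrite inE => /asboolP [y yZ [u [r [Du ->]]]] w.
  by rewrite /lang -!delta_exit //; apply: eqZ.
have [Dw|[u [r [w' [-> Du]]]]] := depth_exit w; first by rewrite !lang_depth // agreeZ.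
rewrite /lang !delta_exit //.
apply: (eq_exit (dr (delta ([::], z.1) u).2 r (stack_top b1),
                 dr (delta ([::], z.2) u).2 r (stack_top b2))).
by rewrite inE; apply/asboolP; exists z => //; exists u, r.
Qed.

Lemma lang_eq_equiv_on1 q1 q2 b1 b2 :
  (forall w, lang (b1, q1) w = lang (b2, q2) w) <-> equiv_on [set (q1, q2)] b1 b2.
Proof.
split=> [eq_lang z|eqZ w]; first by rewrite inE => /eqP ->.
by apply: (eqZ (q1, q2)); rewrite inE.
Qed.

(* Reading the two stacks top-down, the automaton keeps the current set of state
   pairs and whether all previous sets agreed above. *)
Definition eq_state := (bool * {set Q * Q})%type.
Definition eq_init q1 q2 : eq_state := (true, [set (q1, q2)]).
Definition eq_step (e : eq_state) (l : option G * option G) : eq_state :=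
  (e.1 && `[< agree_above e.2 >], exit_pairs e.2 (odflt (bot A) l.1) (odflt (bot A) l.2)).
Definition eq_accept (e : eq_state) : bool := e.1 && `[< equiv_on e.2 [::] [::] >].

Lemma eq_accept_nil ok Z : eq_accept (ok, Z) <-> ok /\ equiv_on Z [::] [::].
Proof. by rewrite /eq_accept /=; split=> [/andP[-> /asboolP]|[-> /asboolP]]. Qed.

Lemma eq_accept_run b1 b2 ok Z :
  eq_accept (foldl eq_step (ok, Z) (zip_pad b1 b2)) <-> ok /\ equiv_on Z b1 b2.
Proof.
move: {2}(size b1 + size b2) (leqnn (size b1 + size b2)) => n.
elim: n b1 b2 ok Z => [|n IH] b1 b2 ok Z le_n.
  by move: le_n; case: b1 b2 => [|??] [|??] // _; apply: eq_accept_nil.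
case: (posnP (size b1 + size b2)) => [/eqP|pos].
  by rewrite addn_eq0 !size_eq0 => /andP[/eqP-> /eqP->]; apply: eq_accept_nil.
rewrite zip_pad_behead //= IH; last by rewrite !size_behead; lia.
have odflt_stack_top b : odflt (bot A) (ohead b) = stack_top b by case: b.
rewrite !odflt_stack_top (equiv_onE Z) /=.
by split=> [[/andP[-> /asboolP]]|[-> [/asboolP]]].
Qed.

End LanguageEquivalence.

Section Reachability.
Variable A : VPA.
Notation Q := (Qs A).
Notation G := (Gm A).

Definition reached_above (b : seq G) (c : conf A) : Prop :=
  exists w u p, [/\ delta (init_conf A) w = (b, p), depth u != None
                  & delta ([::], p) u = c].

Lemma reached_above_step b s q y : reached_above b (s, q) ->
  depth_step (Some (size s)) y != None -> reached_above b (step (s, q) y).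
Proof.
case=> w [u [p [Dw Du Dpu]]] Dy; exists w, (rcons u y), p.
split=> //; last by rewrite delta_rcons Dpu.
case Du': (depth u) Du => [d|] // _; rewrite depth_rcons Du'.
by have [_] := delta_depth Du' [::] p; rewrite Dpu => <-.
Qed.

Lemma delta_init_reached_above w s b q :
  delta (init_conf A) w = (s ++ b, q) -> reached_above b (s, q).
Proof.
have reached_empty w' b' q' :
    delta (init_conf A) w' = (b', q') -> reached_above b' ([::], q').
  by move=> Dw'; exists w', [::], q'.
elim/last_ind: w s q => [|w x IH] s q; first by case: s => // /reached_empty.
rewrite delta_rcons; case Dw: (delta (init_conf A) w) => [s0 q1].
case: x => [[a|r]|i] /=.
- case: s => [|g s] /=.
    move=> Dstep; apply: (reached_empty (rcons w (inl (inl a)))).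
    by rewrite delta_rcons Dw.
  case=> <- eq_s0 <-; rewrite eq_s0 in Dw.
  exact: (reached_above_step (y := inl (inl a)) (IH _ _ Dw)).
- case: s0 Dw => [|g s0] Dw.
    case=> /esym/nilP; rewrite cat_nilp => /andP[/nilP-> /nilP->] <-.
    by apply: (reached_empty (rcons w (inl (inr r)))); rewrite delta_rcons Dw.
  case=> eq_s0 <-; rewrite eq_s0 -cat_cons in Dw.
  exact: (reached_above_step (y := inl (inr r)) (IH _ _ Dw)).
- case=> eq_s0 <-; rewrite eq_s0 in Dw.
  exact: (reached_above_step (y := inr i) (IH _ _ Dw)).
Qed.

Definition push_step (p : Q) (g : G) (r : Q) : Prop :=
  exists2 u, depth u != None & delta ([::], p) u = ([:: g], r).

Lemma rConf_cons g b q : rConf (g :: b, q) <-> exists p, push_step p g q /\ rConf (b, p).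
Proof.
split=> [[w /(@delta_init_reached_above _ [:: g]) [w' [u [p [Dw' Du Dpu]]]]]|].
  by exists p; split; [exists u|exists w'].
case=> p [[u Du Dpu] [w Dw]]; exists (w ++ u).
case Du': (depth u) Du => [d|] // _.
by rewrite delta_cat Dw (delta_depth Du' b p).1 Dpu.
Qed.

Fixpoint push_chain (b : seq G) (q r : Q) : Prop :=
  if b is g :: b' then exists p, push_step p g q /\ push_chain b' p r else r = q.

Lemma rConf_push_chain b q :
  rConf (b, q) <-> exists r, push_chain b q r /\ rConf ([::], r).
Proof.
elim: b q => [|g b IH] q /=; first by split=> [|[r [-> //]]]; exists q.
rewrite rConf_cons; split.
  by case=> p [push_pq /IH [r [chain_pr rConf_r]]]; exists r; split=> //; exists p.
by case=> r [[p [push_pq chain_pr]] rConf_r]; exists p; split=> //; apply/IH; exists r.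
Qed.

End Reachability.

Section LengthLex.
Variable A : VPA.
Variables (rkG : Gm A -> nat) (rkQ : Qs A -> nat).
Notation G := (Gm A).
Notation rank := (rk rkG rkQ).

Fixpoint lex_cmp (u v : seq nat) (d : option bool) : option bool :=
  match u, v with
  | x :: u', y :: v' => if x == y then lex_cmp u' v' d else Some (x < y)
  | _, _ => d
  end.

Lemma lex_le_cmp u v : size u = size v -> lex_le u v = (lex_cmp u v None != Some false).
Proof.
elim: u v => [|x u IH] [|y v] //= [/IH->].
by case: eqP => [<-|_]; rewrite ?ltnn //= orbF; case: (x < y).
Qed.

Lemma lex_cmp_cat u1 u2 v1 v2 d : size u1 = size v1 ->
  lex_cmp (u1 ++ u2) (v1 ++ v2) d = lex_cmp u1 v1 (lex_cmp u2 v2 d).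
Proof. by elim: u1 v1 => [|x u1 IH] [|y v1] //= [/IH->]. Qed.

Definition cmp_step (v : option bool) (m n : nat) := if m == n then v else Some (m < n).

(* Compares two stacks of equal height, given top-first: a difference further down
   overrides the verdict [v] obtained so far. *)
Definition cmp_stacks v (b1 b2 : seq G) :=
  foldl (fun v (gg : G * G) => cmp_step v (rank (inl gg.1)) (rank (inl gg.2)))
        v (zip b1 b2).

Definition cmp_states (q1 q2 : Qs A) := cmp_step None (rank (inr q1)) (rank (inr q2)).

Lemma cmp_stacks_lex b1 b2 v : size b1 = size b2 ->
  cmp_stacks v b1 b2 =
  lex_cmp (map rank (map inl (rev b1))) (map rank (map inl (rev b2))) v.
Proof.
elim: b1 b2 v => [|g1 b1 IH] [|g2 b2] v //= [eq_size].
rewrite /cmp_stacks /= -/(cmp_stacks _ b1 b2) IH // !rev_cons -!cats1 !map_cat.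
by rewrite lex_cmp_cat // !size_map !size_rev.
Qed.

Lemma llex_le_encNgt (b1 b2 : seq G) q1 q2 :
  ~~ llex_le rkG rkQ (enc (b1, q1)) (enc (b2, q2)) =
  (size b2 < size b1) ||
  ((size b2 == size b1) && (cmp_stacks (cmp_states q1 q2) b1 b2 == Some false)).
Proof.
rewrite /llex_le /enc /= !size_cat !size_map !size_rev /= !addn1 !eqSS !ltnS.
case: (ltngtP (size b1) (size b2)) => //= eq_size.
rewrite lex_le_cmp; last by rewrite /= !size_map !size_cat !size_map !size_rev eq_size.
rewrite /= eqxx !map_cat lex_cmp_cat; last by rewrite !size_map !size_rev eq_size.
by rewrite -cmp_stacks_lex ?eq_size //= ltnn negbK.
Qed.

End LengthLex.

Section Representative.
Variable A : VPA.
Variables (rkG : Gm A -> nat) (rkQ : Qs A -> nat).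
Notation Q := (Qs A).
Notation G := (Gm A).
Notation rank := (rk rkG rkQ).

(* A witness state guesses, cell by cell, a stack [b''] and a state [q''] such that
   [(b'', q'')] is reachable, equivalent to the configuration [(b', q')] being read,
   and smaller in the length-lexicographic order.  It records the state reached by a
   [push_chain] along [b''], the run of the equivalence automaton on [b''] and [b'],
   the comparison of [b'] with [b''], and whether [b''] has already ended. *)
Definition wstate := (Q * eq_state A * (option bool * bool))%type.

Definition wstep (j : wstate) (o : option G) (g' : G) (j' : wstate) : Prop :=
  let: (r, e, (v, ended)) := j in let: (r', e', (v', ended')) := j' in
  if o is Some g'' then
    [/\ ~~ ended, ~~ ended', push_step r' g'' r, e' = eq_step e (Some g'', Some g')
      & v' = cmp_step v (rank (inl g')) (rank (inl g''))]
  else [/\ ended', r' = r & e' = eq_step e (None, Some g')].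

Fixpoint wrun (j : wstate) (b' : seq G) (j' : wstate) : Prop :=
  if b' is g' :: b'1 then exists o j1, wstep j o g' j1 /\ wrun j1 b'1 j' else j' = j.

Definition wfinal (j : wstate) : Prop :=
  [/\ rConf ([::], j.1.1), eq_accept j.1.2 & j.2.2 \/ j.2.1 = Some false].

(* Reads only the stack of [c']: the states from which push chains along the cells
   read so far lead to the state of [c'], and a subset construction over witnesses. *)
Definition rstate := ({set Q} * {set wstate})%type.

Definition rstep (d : rstate) (g' : G) : rstate :=
  ([set p | `[< exists2 r, r \in d.1 & push_step p g' r >]],
   [set j' | `[< exists2 j, j \in d.2 & exists o, wstep j o g' j' >]]).

Definition rstep_pair (d : rstate) (l : option G * option G) : rstate :=
  if l.2 is Some g' then rstep d g' else d.

Definition rinit (q' : Q) : rstate :=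
  ([set q'], [set (q'', eq_init q'' q', (cmp_states rkG rkQ q' q'', false)) | q'' : Q]).

Definition raccept (d : rstate) : bool :=
  `[< exists2 r, r \in d.1 & rConf ([::], r) >] &&
  ~~ `[< exists2 j, j \in d.2 & wfinal j >].

Lemma foldl_rstep_pair b1 b2 d : foldl rstep_pair d (zip_pad b1 b2) = foldl rstep d b2.
Proof.
elim: b1 b2 d => [|g1 b1 IH] b2 d; first by elim: b2 d => //= g b2 IH d.
case: b2 => [|g2 b2] /=; last exact: IH.
by elim: b1 {IH} => //=.
Qed.

Lemma rstep_reach b' d p :
  p \in (foldl rstep d b').1 <-> exists2 r, r \in d.1 & push_chain b' r p.
Proof.
elim: b' d p => [|g b' IH] d p /=; first by split=> [pd|[r rd ->]] //; exists p.
rewrite IH; split.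
  by case=> r1; rewrite inE => /asboolP[r rd push_r1r] chain; exists r => //; exists r1.
case=> r rd [r1 [push_r1r chain]]; exists r1 => //.
by rewrite inE; apply/asboolP; exists r.
Qed.

Lemma rstep_witness b' d j' :
  j' \in (foldl rstep d b').2 <-> exists2 j, j \in d.2 & wrun j b' j'.
Proof.
elim: b' d j' => [|g b' IH] d j' /=; first by split=> [jd|[j jd ->]] //; exists j'.
rewrite IH; split.
  case=> j1; rewrite inE => /asboolP[j jd [o step_j]] run.
  by exists j => //; exists o, j1.
case=> j jd [o [j1 [step_j run]]]; exists j1 => //.
by rewrite inE; apply/asboolP; exists j => //; exists o.
Qed.

Lemma wrun_ended b' r e v j' : wrun (r, e, (v, true)) b' j' <->
  [/\ j'.1 = (r, foldl (@eq_step A) e (zip_pad [::] b')), j'.2.2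
    & b' = [::] -> j'.2.1 = v].
Proof.
elim: b' r e v j' => [|g b' IH] r e v [[r' e'] [v' ended']] /=.
  by split=> [[-> -> -> ->]|[[-> ->] -> /(_ erefl) ->]].
split=> [[[g''|]] [[[r1 e1] [v1 ended1]]] [] /=|[[-> ->] ->] _]; first by case.
  by case=> -> -> -> /IH[[-> ->] /= -> _].
by exists None, (r, eq_step e (None, Some g), (v', true)); split=> //; apply/IH.
Qed.

Lemma wrun_active b' r e v j' : wrun (r, e, (v, false)) b' j' <->
  exists b'', [/\ size b'' <= size b', push_chain b'' r j'.1.1,
     j'.1.2 = foldl (@eq_step A) e (zip_pad b'' b'), j'.2.2 = (size b'' < size b')
   & size b'' = size b' -> j'.2.1 = cmp_stacks rkG rkQ v b' b''].
Proof.
elim: b' r e v j' => [|g b' IH] r e v [[r' e'] [v' ended']] /=.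
  split=> [[-> -> -> ->]|[[|??] [//= _ -> -> -> /(_ erefl) ->]]] //.
  by exists [::].
split.
  case=> [[g''|]] [[[r1 e1] [v1 ended1]]] [] /=.
    case=> _ /negbTE-> push_r1r -> -> /IH[b'' [le_size chain e'_eq ended'_eq eq_cmp]].
    by exists (g'' :: b''); split=> //=; [exists r1|case=> /eq_cmp].
  by case=> -> -> -> /wrun_ended[[-> ->] /= -> _]; exists [::].
case=> [[|g'' b'']] /= [le_size chain -> -> eq_cmp].
  exists None, (r, eq_step e (None, Some g), (v', true)); split=> //.
  by apply/wrun_ended; rewrite chain.
case: chain => p [push_pr chain].
exists (Some g''), (p, eq_step e (Some g'', Some g),
                    (cmp_step v (rank (inl g)) (rank (inl g'')), false)).
split=> //; apply/IH; exists b''; split=> // eq_size.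
by apply: eq_cmp; rewrite eq_size.
Qed.

Lemma eq_accept_init q1 q2 b1 b2 :
  eq_accept (foldl (@eq_step A) (eq_init q1 q2) (zip_pad b1 b2)) <->
  equiv_on [set (q1, q2)] b1 b2.
Proof. by rewrite eq_accept_run; split=> [[]|]. Qed.

Lemma raccept_reach b' q' :
  (exists2 r, r \in (foldl rstep (rinit q') b').1 & rConf ([::], r)) <-> rConf (b', q').
Proof.
rewrite rConf_push_chain; split=> [[r /rstep_reach[q]]|[r [chain rConf_r]]].
  by rewrite inE => /eqP-> chain rConf_r; exists r.
by exists r => //; apply/rstep_reach; exists q'; rewrite ?inE.
Qed.

Lemma raccept_witness b' q' :
  (exists2 j, j \in (foldl rstep (rinit q') b').2 & wfinal j) <->
  exists b'' q'', [/\ rConf (b'', q''), equiv_on [set (q'', q')] b'' b'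
                    & ~~ llex_le rkG rkQ (enc (b', q')) (enc (b'', q''))].
Proof.
split.
  case=> j /rstep_witness[j0 + run] [rConf_r acc_e ended_or_less].
  case/imsetP=> q'' _ j0_eq; subst j0.
  case/wrun_active: run => b'' [le_size chain e_eq ended_eq cmp_eq].
  exists b'', q''; split.
  - by apply/rConf_push_chain; exists j.1.1.
  - by apply/eq_accept_init; rewrite -e_eq.
  - rewrite llex_le_encNgt.
    case: ended_or_less => [|less]; first by rewrite ended_eq => ->.
    case: (ltngtP (size b'') (size b')) le_size => //= eq_size _.
    by rewrite -(cmp_eq eq_size) less.
case=> b'' [q'' [/rConf_push_chain[r [chain rConf_r]] equiv]].
rewrite llex_le_encNgt => less.
have le_size : size b'' <= size b' by case/orP: less => [/ltnW|/andP[/eqP-> _]].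
exists (r, foldl (@eq_step A) (eq_init q'' q') (zip_pad b'' b'),
        (cmp_stacks rkG rkQ (cmp_states rkG rkQ q' q'') b' b'', size b'' < size b')).
  apply/rstep_witness; exists (q'', eq_init q'' q', (cmp_states rkG rkQ q' q'', false)).
    by apply/imsetP; exists q''.
  by apply/wrun_active; exists b''.
split=> //; first exact/eq_accept_init.
by case/orP: less => [->|/andP[_ /eqP->]]; [left|right].
Qed.

Definition rep_state := (eq_state A * rstate)%type.
Definition rep_init (q q' : Q) : rep_state := (eq_init q q', rinit q').
Definition rep_step (d : rep_state) (l : option G * option G) : rep_state :=
  (eq_step d.1 l, rstep_pair d.2 l).
Definition rep_accept (d : rep_state) : bool := eq_accept d.1 && raccept d.2.

Lemma foldl_rep_step L e d :
  foldl rep_step (e, d) L = (foldl (@eq_step A) e L, foldl rstep_pair d L).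
Proof. by elim: L e d => //= l L IH e d; rewrite -IH. Qed.

Theorem accepts_pair_rep c c' :
  accepts_pair rep_init rep_step rep_accept c c' <-> is_rep rkG rkQ c c'.
Proof.
case: c c' => [b q] [b' q']; rewrite /accepts_pair foldl_rep_step /rep_accept /=.
rewrite foldl_rstep_pair /raccept.
have lang_c_equiv b1 q1 :
    (forall w, lang (b1, q1) w = lang (b, q) w) <-> equiv_on [set (q, q1)] b b1.
  by rewrite -lang_eq_equiv_on1; split=> eq_lang w; rewrite eq_lang.
split.
  case/andP=> /eq_accept_init/lang_c_equiv equiv /andP[/asboolP/raccept_reach rConf_c'].
  move/asboolP=> no_witness; split=> // -[b'' q''] rConf_c'' equiv''.
  apply/negPn/negP => smaller; apply: no_witness; apply/raccept_witness.
  exists b'', q''; split=> //; apply/lang_eq_equiv_on1 => w.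
  by rewrite equiv'' equiv.
case=> rConf_c' equiv minimal; apply/and3P; split.
- exact/eq_accept_init/lang_c_equiv.
- exact/asboolP/raccept_reach.
- apply/asboolP => /raccept_witness[b'' [q'' [rConf_c'' equiv'' /negP]]]; apply.
  apply: minimal rConf_c'' _ => w.
  by rewrite -equiv; move/lang_eq_equiv_on1: equiv''.
Qed.

End Representative.

Theorem lemma8 (A : VPA) (rkG : Gm A -> nat) (rkQ : Qs A -> nat)
  (rkG_inj : injective rkG) (rkQ_inj : injective rkQ) :
  rational_fun (fun (w : seq (Sigmaf A)) (u : seq (Gm A + Qs A)) =>
                  exists c, tf_rel w c /\ u = enc c)
  /\
  rational_fun (fun (w : seq (Sigmaf A)) (u : seq (Gm A + Qs A)) =>
                  exists c', nuf_rel rkG rkQ w c' /\ u = enc c').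
Proof.
split; first exact: rational_tf.
have := rational_tf_accepts_pair (rep_init rkG rkQ) (rep_step rkG rkQ) (@rep_accept A).
apply: rat_ext.
move=> [w u] /=; split.
  case=> c [c' [tf_wc /accepts_pair_rep rep_cc' ->]].
  by exists c'; split=> //; exists c.
case=> c' [[c [tf_wc rep_cc']] ->].
by exists c, c'; split=> //; apply/accepts_pair_rep.
Qed.
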